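(* Euler's constant $\gamma:=\lim_{n\to\infty}\left(1+\frac12+\cdots+\frac1n-\ln n\right)$ satisfies \[ \gamma=\int_0^\infty\sum_{k=2}^\infty\frac{1}{k^2\binom{t+k}{k}}\,dt . \]
   Context: The generalized binomial coefficient is $\binom{s}{t}:=\frac{\Gamma(s+1)}{\Gamma(t+1)\Gamma(s-t+1)}$. *)

From Stdlib Require Import Reals Arith.
Open Scope R_scope.

Fixpoint falling (s : R) (k : nat) : R :=
  match k with
  | O => 1
  | S k' => falling s k' * (s - INR k')
  end.

(* generalized binomial coefficient binom(s, k) for natural k:
   Gamma(s+1)/(Gamma(k+1) Gamma(s-k+1)) = s(s-1)...(s-k+1)/k! *)
Definition gbinom (s : R) (k : nat) : R := falling s k / INR (Factorial.fact k).

(* n-th partial Euler sequence, indexed so that index n gives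
   1 + 1/2 + ... + 1/(n+1) - ln (n+1) *)
Definition euler_seq (n : nat) : R :=
  sum_f_R0 (fun i => / INR (i + 1)) n - ln (INR (n + 1)).

Definition gterm (t : R) (k : nat) : R :=
  / (INR k ^ 2 * gbinom (t + INR k) k).

Definition improper_integral_0_inf (f : R -> R) (l : R) : Prop :=
  exists pr : forall b : R, Riemann_integrable f 0 b,
    forall eps : R, eps > 0 -> exists M : R, forall b : R, b >= M ->
      Rabs (RiemannInt (pr b) - l) < eps.

(* Let f(t) = sum_{k>=2} 1/(k^2 binom(t+k,k)) and P(x) = int_0^x f.  Writing
   binom(t+k,k) = (t+1)...(t+k)/k!, the summands telescope in t and give the
   functional equation  f(t) - f(t+1) = 1/((t+1)^2 (t+2))  for t >= 0.  The
   right-hand side is the derivative of  ln(y+2) - ln(y+1) - 1/(y+1),  so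
   Q(y) = P(y+1) - P(y) + ln(y+2) - ln(y+1) - 1/(y+1)  has zero derivative on
   [0, oo); since |Q(y)| <= 1/(y+1), Q vanishes identically.  Evaluated at the
   integers this yields P(N) = 1 + 1/2 + ... + 1/N - ln(N+1), so P(N) -> gamma,
   and P, being nondecreasing (f >= 0), tends to gamma at +oo. *)

From Stdlib Require Import Reals Lra Lia Factorial.
From Coquelicot Require Import Coquelicot.
Open Scope R_scope.

Lemma falling_succ_shift (s : R) (k : nat) :
  falling (s + 1) (S k) = (s + 1) * falling s k.
Proof.
  revert s; induction k as [|k IH]; intros s; [simpl; ring|].
  change (falling (s + 1) (S (S k))) with (falling (s + 1) (S k) * (s + 1 - INR (S k))).
  rewrite IH; simpl falling; rewrite S_INR; ring.
Qed.

(* The numerator of binom(t+k, k): rising t k = (t+1)(t+2)...(t+k). *)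
Definition rising (t : R) (k : nat) : R := falling (t + INR k) k.

Lemma rising_succ (t : R) (k : nat) :
  rising t (S k) = rising t k * (t + INR k + 1).
Proof.
  unfold rising; rewrite S_INR, <- Rplus_assoc, falling_succ_shift; ring.
Qed.

Lemma rising_shift (t : R) (k : nat) :
  rising (t + 1) k * (t + 1) = rising t k * (t + INR k + 1).
Proof.
  unfold rising.
  pose proof (falling_succ_shift (t + INR k) k) as H; simpl falling in H.
  replace (t + 1 + INR k) with (t + INR k + 1) by ring.
  replace (t + INR k + 1 - INR k) with (t + 1) in H by ring.
  rewrite H; ring.
Qed.

Lemma rising_pos (t : R) (k : nat) : -1 < t -> 0 < rising t k.
Proof.
  intros Ht; induction k as [|k IH]; [unfold rising; simpl; lra|].
  rewrite rising_succ; pose proof (pos_INR k); apply Rmult_lt_0_compat; lra.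
Qed.

(* Each factor t+i exceeds i, and the first one is t+1: (t+1) k! <= rising t k. *)
Lemma rising_ge_fact (t : R) (k : nat) : 0 <= t -> (1 <= k)%nat ->
  (t + 1) * INR (fact k) <= rising t k.
Proof.
  intros Ht Hk; induction Hk as [|k Hk IH]; [unfold rising; simpl; lra|].
  rewrite rising_succ, fact_simpl, mult_INR, S_INR.
  pose proof (pos_INR (fact k)).
  replace ((t + 1) * ((INR k + 1) * INR (fact k)))
    with ((t + 1) * INR (fact k) * (INR k + 1)) by ring.
  apply Rmult_le_compat; try nra; pose proof (pos_INR k); lra.
Qed.

Lemma gterm_rising (t : R) (k : nat) : -1 < t ->
  gterm t k = INR (fact k) / (INR k ^ 2 * rising t k).
Proof.
  intros Ht; unfold gterm, gbinom, rising.
  pose proof (rising_pos t k Ht) as Hr; unfold rising in Hr.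
  pose proof (INR_fact_lt_0 k).
  destruct k as [|k].
  - simpl; unfold Rdiv; rewrite !Rmult_0_l, Rinv_0; ring.
  - assert (INR (S k) <> 0) by (apply not_0_INR; lia).
    field; repeat split; lra.
Qed.

Definition shift_tail (t : R) (k : nat) : R :=
  INR (fact k) / (INR k * rising t k * (t + 1)).

Lemma gterm_shift_telescope (t : R) (k : nat) : -1 < t -> (1 <= k)%nat ->
  gterm t k - gterm (t + 1) k = shift_tail t k - shift_tail t (S k).
Proof.
  intros Ht Hk.
  rewrite (gterm_rising t k Ht), (gterm_rising (t + 1) k ltac:(lra)).
  unfold shift_tail.
  pose proof (rising_pos t k Ht); pose proof (pos_INR k).
  assert (INR k <> 0) by (apply not_0_INR; lia).
  assert (Hshift : rising (t + 1) k = rising t k * (t + INR k + 1) / (t + 1))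
    by (rewrite <- rising_shift; field; lra).
  rewrite Hshift, rising_succ, fact_simpl, mult_INR, S_INR.
  field; repeat split; lra.
Qed.

Lemma sum_telescope (a : nat -> R) (K : nat) :
  sum_f_R0 (fun n => a n - a (S n)) K = a 0%nat - a (S K).
Proof. induction K as [|K IH]; simpl; [|rewrite IH]; ring. Qed.

Lemma shift_tail_two (t : R) : -1 < t -> shift_tail t 2 = / ((t + 1) ^ 2 * (t + 2)).
Proof.
  intros Ht; unfold shift_tail, rising; simpl; field; lra.
Qed.

Lemma shift_tail_bound (t : R) (k : nat) : 0 <= t -> (1 <= k)%nat ->
  0 <= shift_tail t k <= / INR k.
Proof.
  intros Ht Hk; unfold shift_tail.
  pose proof (rising_ge_fact t k Ht Hk); pose proof (rising_pos t k ltac:(lra)).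
  pose proof (INR_fact_lt_0 k).
  assert (0 < INR k) by (apply lt_0_INR; lia).
  assert (Hden : 0 < INR k * rising t k * (t + 1)) by (repeat apply Rmult_lt_0_compat; lra).
  split; [apply Rle_mult_inv_pos; lra|].
  unfold Rdiv; rewrite <- (Rmult_1_l (/ INR k)).
  apply (Rmult_le_reg_r (INR k * rising t k * (t + 1))); [lra|].
  field_simplify; try lra.
  nra.
Qed.

(* For t >= 0 the summands are dominated by a telescoping sequence:
   gterm t (n+2) <= 1/((t+1)(n+2)^2) <= (1/(t+1)) (1/(n+1) - 1/(n+2)). *)
Lemma gterm_bound (t : R) (n : nat) : 0 <= t ->
  0 <= gterm t (n + 2) <= / (t + 1) * (/ INR (n + 1) - / INR (n + 2)).
Proof.
  intros Ht; rewrite gterm_rising by lra.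
  pose proof (rising_ge_fact t (n + 2) Ht ltac:(lia)) as Hge.
  pose proof (rising_pos t (n + 2) ltac:(lra)).
  pose proof (INR_fact_lt_0 (n + 2)).
  rewrite !plus_INR in *; simpl INR in *; pose proof (pos_INR n).
  set (F := INR (fact (n + 2))) in *; set (P := rising t (n + 2)) in *.
  assert (Hden : 0 < (INR n + (1 + 1)) ^ 2 * P) by (apply Rmult_lt_0_compat; nra).
  split; [apply Rle_mult_inv_pos; lra|].
  replace (/ (t + 1) * (/ (INR n + 1) - / (INR n + (1 + 1))))
    with (/ ((t + 1) * (INR n + 1) * (INR n + 2))) by (field; lra).
  assert (Hfrac : F / ((INR n + (1 + 1)) ^ 2 * P) <= / ((t + 1) * (INR n + 2) ^ 2)).
  { apply (Rmult_le_reg_r ((INR n + (1 + 1)) ^ 2 * P * ((t + 1) * (INR n + 2) ^ 2)));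
      [apply Rmult_lt_0_compat; nra|].
    field_simplify; nra. }
  eapply Rle_trans; [exact Hfrac|].
  apply Rinv_le_contravar; [repeat apply Rmult_lt_0_compat; lra|].
  nra.
Qed.

Lemma cv_const (c : R) : Un_cv (fun _ => c) c.
Proof.
  intros eps Heps; exists 0%nat; intros; unfold Rdist.
  rewrite Rminus_diag, Rabs_R0; lra.
Qed.

Lemma inv_INR_cv0 (j : nat) : Un_cv (fun n => / INR (n + j)) 0.
Proof.
  apply cv_infty_cv_0; intros M.
  destruct (INR_unbounded M) as [N HN]; exists N; intros n Hn.
  assert (INR N <= INR (n + j)) by (apply le_INR; lia); lra.
Qed.

Section DominatedSeries.

Variables (u : nat -> R) (c : R).
Hypothesis u_dominated : forall n, 0 <= u n <= c * (/ INR (n + 1) - / INR (n + 2)).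

Let partial (N : nat) : R := sum_f_R0 u N.

Lemma dominated_partial_growing : Un_growing partial.
Proof. intros n; unfold partial; rewrite tech5; destruct (u_dominated (S n)); lra. Qed.

(* Adding the bound c/(N+2) on the remainder makes the partial sums decrease. *)
Lemma dominated_partial_corrected_decreasing :
  Un_decreasing (fun N => partial N + c / INR (N + 2)).
Proof.
  intros n; unfold partial; rewrite tech5.
  destruct (u_dominated (S n)) as [_ Hu].
  replace (S n + 1)%nat with (n + 2)%nat in Hu by lia.
  unfold Rdiv; lra.
Qed.

Lemma dominated_partial_le (N : nat) : partial N <= c.
Proof.
  pose proof (decreasing_prop _ 0 N dominated_partial_corrected_decreasing
                ltac:(lia)) as H.
  pose proof (pos_INR (N + 2)); pose proof (u_dominated 0%nat) as [Hu0pos Hu0].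
  assert (0 <= c / INR (N + 2)).
  { assert (0 <= c) by (simpl in Hu0; lra).
    apply Rle_mult_inv_pos; [lra|apply lt_0_INR; lia]. }
  unfold partial in *; simpl in *; lra.
Qed.

Lemma dominated_limit_bounds (l : R) : Un_cv partial l -> forall K : nat,
  partial K <= l <= partial K + c / INR (K + 2).
Proof.
  intros Hl K; split; [exact (growing_ineq _ _ dominated_partial_growing Hl K)|].
  apply (decreasing_ineq _ _ dominated_partial_corrected_decreasing).
  assert (Hc : Un_cv (fun N => c / INR (N + 2)) 0).
  { replace 0 with (c * 0) by ring.
    exact (CV_mult _ _ _ _ (cv_const c) (inv_INR_cv0 2)). }
  pose proof (CV_plus _ _ _ _ Hl Hc) as H; rewrite Rplus_0_r in H; exact H.
Qed.

Lemma dominated_limit_range (l : R) : Un_cv partial l -> 0 <= l <= c.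
Proof.
  intros Hl; destruct (dominated_limit_bounds l Hl 0) as [Hlo Hhi].
  pose proof (u_dominated 0%nat) as [Hu0pos Hu0].
  unfold partial in *; simpl in *; split; [lra|].
  replace (/ (1 + 1)) with (/ 2) in Hu0 by (f_equal; ring).
  replace (1 + 1) with 2 in Hhi by ring.
  rewrite Rinv_1 in Hu0; lra.
Qed.

End DominatedSeries.

Lemma falling_continuous (k : nat) : continuity (fun s => falling s k).
Proof.
  induction k as [|k IH]; simpl.
  - apply continuity_const; intros ??; reflexivity.
  - change (continuity (mult_fct (fun s => falling s k) (fun s => s - INR k))).
    apply continuity_mult; [exact IH|reg].
Qed.

(* The summands are continuous in t on (-1, oo); we use them through |t| so as
   to have a function continuous on the whole line. *)
Lemma gterm_abs_continuous (k : nat) (x : R) : (1 <= k)%nat ->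
  continuity_pt (fun t => gterm (Rabs t) k) x.
Proof.
  intros Hk.
  change (continuity_pt (inv_fct (comp (fun s =>
    INR k ^ 2 * (falling (s + INR k) k / INR (fact k))) Rabs)) x).
  apply continuity_pt_inv.
  - apply continuity_pt_comp; [apply Rcontinuity_abs|].
    apply continuity_pt_mult; [apply continuity_pt_const; intros ??; reflexivity|].
    apply continuity_pt_div;
      [|apply continuity_pt_const; intros ??; reflexivity|apply INR_fact_neq_0].
    apply (continuity_pt_comp (fun s => s + INR k) (fun s => falling s k));
      [reg|apply falling_continuous].
  - pose proof (rising_pos (Rabs x) k ltac:(pose proof (Rabs_pos x); lra)) as Hr.
    unfold rising in Hr; unfold comp.
    pose proof (INR_fact_lt_0 k); assert (0 < INR k) by (apply lt_0_INR; lia).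
    apply Rgt_not_eq, Rmult_lt_0_compat; [apply pow_lt; lra|].
    apply Rdiv_lt_0_compat; lra.
Qed.

Definition gpartial (t : R) (N : nat) : R := sum_f_R0 (fun n => gterm (Rabs t) (n + 2)) N.

Lemma gterm_abs_dominated (t : R) (n : nat) :
  0 <= gterm (Rabs t) (n + 2) <= / (Rabs t + 1) * (/ INR (n + 1) - / INR (n + 2)).
Proof. apply gterm_bound, Rabs_pos. Qed.

Lemma gpartial_bounded (t : R) : has_ub (gpartial t).
Proof.
  exists (/ (Rabs t + 1)); intros x [N ->].
  exact (dominated_partial_le _ _ (gterm_abs_dominated t) N).
Qed.

Definition gsum (t : R) : R :=
  proj1_sig (growing_cv (gpartial t)
    (dominated_partial_growing _ _ (gterm_abs_dominated t)) (gpartial_bounded t)).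

Lemma gsum_cv (t : R) : Un_cv (gpartial t) (gsum t).
Proof. unfold gsum; destruct growing_cv as [l Hl]; exact Hl. Qed.

Lemma gsum_approx (t : R) (K : nat) :
  gpartial t K <= gsum t <= gpartial t K + / (Rabs t + 1) / INR (K + 2).
Proof. exact (dominated_limit_bounds _ _ (gterm_abs_dominated t) _ (gsum_cv t) K). Qed.

Lemma gsum_range (t : R) : 0 <= gsum t <= / (Rabs t + 1).
Proof. exact (dominated_limit_range _ _ (gterm_abs_dominated t) _ (gsum_cv t)). Qed.

Lemma cv0_squeeze (u v : nat -> R) :
  (forall n, 0 <= u n <= v n) -> Un_cv v 0 -> Un_cv u 0.
Proof.
  intros Huv Hv eps Heps; destruct (Hv eps Heps) as [N HN]; exists N; intros n Hn.
  specialize (HN n Hn); specialize (Huv n); unfold Rdist in *.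
  rewrite Rminus_0_r in *; rewrite Rabs_pos_eq in * by lra; lra.
Qed.

Lemma gsum_shift (t : R) : 0 <= t -> gsum t - gsum (t + 1) = / ((t + 1) ^ 2 * (t + 2)).
Proof.
  intros Ht.
  assert (Hdiff : forall N, gpartial t N - gpartial (t + 1) N
                            = shift_tail t 2 - shift_tail t (N + 3)).
  { intros N; unfold gpartial; rewrite <- minus_sum.
    rewrite (Rabs_pos_eq t), (Rabs_pos_eq (t + 1)) by lra.
    rewrite (sum_eq _ (fun n => shift_tail t (n + 2) - shift_tail t (S (n + 2))))
      by (intros n _; apply gterm_shift_telescope; lia || lra).
    rewrite (sum_telescope (fun n => shift_tail t (n + 2))).
    do 2 f_equal; lia. }
  assert (Htail : Un_cv (fun N => shift_tail t (N + 3)) 0).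
  { apply (cv0_squeeze _ _ (fun N => shift_tail_bound t (N + 3) Ht ltac:(lia))).
    exact (inv_INR_cv0 3). }
  pose proof (CV_minus _ _ _ _ (gsum_cv t) (gsum_cv (t + 1))) as H1.
  pose proof (CV_minus _ _ _ _ (cv_const (shift_tail t 2)) Htail) as H2.
  rewrite <- shift_tail_two, <- (Rminus_0_r (shift_tail t 2)) by lra.
  apply (UL_sequence _ _ _ H1); apply (Un_cv_ext _ _ (fun N => eq_sym (Hdiff N))) in H2.
  exact H2.
Qed.

(* The partial sums converge uniformly (remainder <= 1/(K+2)), hence the
   integrand is continuous. *)
Lemma gsum_continuous (x : R) : continuity_pt gsum x.
Proof.
  apply (CVU_continuity (fun N t => gpartial t N) gsum x (mkposreal 1 Rlt_0_1));
    [|intros N y _; apply continuity_pt_finite_SF; intros n _;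
      apply gterm_abs_continuous; lia|unfold Boule; rewrite Rminus_diag, Rabs_R0; simpl; lra].
  intros eps Heps; destruct (inv_INR_cv0 2 eps Heps) as [N HN]; exists N.
  intros n y Hn _; specialize (HN n Hn); unfold Rdist in HN.
  pose proof (gsum_approx y n) as Happrox.
  assert (Hpos : 0 < / INR (n + 2)) by (apply Rinv_0_lt_compat, lt_0_INR; lia).
  assert (Hy : / (Rabs y + 1) <= 1).
  { rewrite <- Rinv_1; apply Rinv_le_contravar; pose proof (Rabs_pos y); lra. }
  rewrite Rminus_0_r, Rabs_pos_eq in HN by lra.
  rewrite Rabs_pos_eq by lra.
  unfold Rdiv in Happrox; nra.
Qed.

Lemma gsum_integrable (a b : R) : Riemann_integrable gsum a b.
Proof.
  destruct (Rle_dec a b) as [Hab|Hab].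
  - apply continuity_implies_RiemannInt; [exact Hab|intros; apply gsum_continuous].
  - apply RiemannInt_P1, continuity_implies_RiemannInt; [lra|intros; apply gsum_continuous].
Qed.

Definition gprim (x : R) : R := RiemannInt (gsum_integrable 0 x).

Lemma gprim_chasles (x y : R) : gprim y - gprim x = RiemannInt (gsum_integrable x y).
Proof. unfold gprim; rewrite <- (RiemannInt_P26 (gsum_integrable 0 x) (gsum_integrable x y)); ring. Qed.

Lemma gprim_derivative (x : R) : derivable_pt_lim gprim x (gsum x).
Proof.
  assert (h : x - 1 <= x + 1) by lra.
  assert (C0 : forall y, x - 1 <= y <= x + 1 -> continuity_pt gsum y)
    by (intros; apply gsum_continuous).
  apply (derivable_pt_lim_locally_ext
           (fun y => primitive h (FTC_P1 h C0) y + gprim (x - 1)) gprim x (x - 1) (x + 1));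
    [lra| |].
  - intros z Hz; unfold primitive.
    destruct (Rle_dec (x - 1) z); [|lra]; destruct (Rle_dec z (x + 1)); [|lra].
    unfold gprim; rewrite <- (RiemannInt_P26 (gsum_integrable 0 (x - 1)) (FTC_P1 h C0 r r0) (gsum_integrable 0 z)).
    ring.
  - rewrite <- (Rplus_0_r (gsum x)).
    apply derivable_pt_lim_plus; [apply (RiemannInt_P27 h C0); lra|].
    apply derivable_pt_lim_const.
Qed.

Lemma gprim_increment (x y l u : R) : x <= y ->
  (forall t, x < t < y -> l <= gsum t <= u) ->
  l * (y - x) <= gprim y - gprim x <= u * (y - x).
Proof. intros Hxy Hb; rewrite gprim_chasles; exact (RiemannInt_const_bound _ Hxy Hb). Qed.

Lemma gprim_monotone (x y : R) : x <= y -> gprim x <= gprim y.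
Proof.
  intros Hxy.
  assert (Hb : forall t, x < t < y -> 0 <= gsum t <= 1).
  { intros t _; pose proof (gsum_range t) as [H0 H1]; split; [exact H0|].
    eapply Rle_trans; [exact H1|]; rewrite <- Rinv_1.
    apply Rinv_le_contravar; pose proof (Rabs_pos t); lra. }
  pose proof (gprim_increment x y 0 1 Hxy Hb); lra.
Qed.

Definition ln_correction (y : R) : R := ln (y + 2) - ln (y + 1) - / (y + 1).

Lemma ln_correction_derivative (y : R) : -1 < y ->
  derivable_pt_lim ln_correction y (/ ((y + 1) ^ 2 * (y + 2))).
Proof.
  intros Hy; apply is_derive_Reals; unfold ln_correction.
  auto_derive; [repeat split; lra|field; lra].
Qed.

Lemma ln_succ_increment (x : R) : 0 < x -> 0 <= ln (x + 1) - ln x <= / x.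
Proof.
  intros Hx; assert (Hinv : 0 < / x) by (apply Rinv_0_lt_compat; lra).
  split; [pose proof (ln_increasing x (x + 1) Hx ltac:(lra)); lra|].
  replace (x + 1) with (x * (1 + / x)) by (field; lra).
  rewrite ln_mult by lra.
  assert (ln (1 + / x) < ln (exp (/ x))) by (apply ln_increasing; [lra|apply exp_ineq1; lra]).
  rewrite ln_exp in *; lra.
Qed.

Definition balance (y : R) : R := gprim (y + 1) - gprim y + ln_correction y.

Lemma balance_derivative (y : R) : 0 <= y -> derivable_pt_lim balance y 0.
Proof.
  intros Hy.
  replace 0 with (gsum (y + 1) * 1 - gsum y + / ((y + 1) ^ 2 * (y + 2)))
    by (rewrite <- (gsum_shift y Hy); ring).
  change (derivable_pt_lim (plus_fct (minus_fct (comp gprim (fun z => z + 1)) gprim)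
            ln_correction) y (gsum (y + 1) * 1 - gsum y + / ((y + 1) ^ 2 * (y + 2)))).
  apply derivable_pt_lim_plus; [apply derivable_pt_lim_minus|].
  - apply derivable_pt_lim_comp; [|apply gprim_derivative].
    apply is_derive_Reals; auto_derive; [exact I|ring].
  - apply gprim_derivative.
  - apply ln_correction_derivative; lra.
Qed.

Lemma balance_constant (y : R) : 0 <= y -> balance y = balance 0.
Proof.
  intros Hy.
  assert (pr : forall x, 0 < x < y -> derivable_pt balance x)
    by (intros x Hx; exists 0; apply balance_derivative; lra).
  refine (null_derivative_loc balance 0 y pr _ _ y _); [| |lra].
  - intros x Hx; apply derivable_continuous_pt; exists 0; apply balance_derivative; lra.
  - intros x Hx; apply derive_pt_eq_0, balance_derivative; lra.
Qed.

(* Both int_y^{y+1} f and ln(y+2) - ln(y+1) lie in [0, 1/(y+1)]. *)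
Lemma balance_bound (y : R) : 0 <= y -> Rabs (balance y) <= / (y + 1).
Proof.
  intros Hy; unfold balance, ln_correction.
  assert (Hf : forall t, y < t < y + 1 -> 0 <= gsum t <= / (y + 1)).
  { intros t Ht; pose proof (gsum_range t) as [H0 H1]; split; [exact H0|].
    rewrite Rabs_pos_eq in H1 by lra.
    eapply Rle_trans; [exact H1|apply Rinv_le_contravar; lra]. }
  pose proof (gprim_increment y (y + 1) _ _ ltac:(lra) Hf) as Hint.
  pose proof (ln_succ_increment (y + 1) ltac:(lra)) as Hln.
  replace (y + 1 + 1) with (y + 2) in Hln by ring.
  replace (y + 1 - y) with 1 in Hint by ring.
  apply Rabs_le; lra.
Qed.

Lemma balance_vanishes (y : R) : 0 <= y -> balance y = 0.
Proof.
  intros Hy; rewrite (balance_constant y Hy).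
  destruct (Req_dec (balance 0) 0) as [H0|Hne]; [exact H0|exfalso].
  assert (Hpos : 0 < Rabs (balance 0)) by (apply Rabs_pos_lt; exact Hne).
  set (z := / Rabs (balance 0)).
  assert (Hz : 0 < z) by (apply Rinv_0_lt_compat; exact Hpos).
  pose proof (balance_bound z ltac:(lra)) as Hb.
  rewrite (balance_constant z ltac:(lra)) in Hb.
  assert (/ (z + 1) < / z) by (apply Rinv_lt_contravar; nra).
  unfold z in *; rewrite Rinv_inv in *; lra.
Qed.

(* Since Q vanishes at the integers, P(N) is the N-th Euler partial sum
   1 + 1/2 + ... + 1/N - ln(N+1). *)
Lemma gprim_nat (N : nat) : gprim (INR N) = euler_seq N - / INR (N + 1).
Proof.
  induction N as [|N IH].
  - unfold gprim, euler_seq; simpl; rewrite RiemannInt_P9, ln_1; field.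
  - pose proof (balance_vanishes (INR N) (pos_INR N)) as H0.
    unfold balance, ln_correction in H0.
    rewrite S_INR; replace (gprim (INR N + 1))
      with (gprim (INR N) - (ln (INR N + 2) - ln (INR N + 1) - / (INR N + 1))) by lra.
    rewrite IH; unfold euler_seq; rewrite tech5.
    replace (S N + 1)%nat with (S (N + 1)) by lia.
    rewrite !S_INR, !plus_INR; simpl INR.
    replace (INR N + 1 + 1) with (INR N + 2) by ring.
    field; pose proof (pos_INR N); lra.
Qed.

Lemma monotone_cv_at_infinity (F : R -> R) (l : R) :
  (forall x y, x <= y -> F x <= F y) -> Un_cv (fun N => F (INR N)) l ->
  forall eps, eps > 0 -> exists M, forall b, b >= M -> Rabs (F b - l) < eps.
Proof.
  intros Hmono Hcv eps Heps.
  assert (Hgrow : Un_growing (fun N => F (INR N)))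
    by (intros n; apply Hmono, le_INR; lia).
  destruct (Hcv eps Heps) as [N0 HN0]; specialize (HN0 N0 (le_n N0)).
  unfold Rdist in HN0; apply Rabs_def2 in HN0.
  exists (INR N0); intros b Hb.
  destruct (INR_unbounded b) as [N HN].
  pose proof (Hmono _ _ (Rge_le _ _ Hb)); pose proof (Hmono b (INR N) ltac:(lra)).
  pose proof (growing_ineq _ _ Hgrow Hcv N).
  apply Rabs_def1; lra.
Qed.

Theorem proposition2 (gamma : R) :
  Un_cv euler_seq gamma ->
  exists f : R -> R,
    (forall t : R, 0 <= t -> infinite_sum (fun n => gterm t (n + 2)) (f t)) /\
    improper_integral_0_inf f gamma.
Proof.
  intros Hgamma; exists gsum; split.
  - intros t Ht; pose proof (gsum_cv t) as H.
    unfold gpartial in H; rewrite (Rabs_pos_eq t Ht) in H; exact H.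
  - exists (gsum_integrable 0); apply (monotone_cv_at_infinity gprim);
      [exact gprim_monotone|].
    assert (H : Un_cv (fun N => euler_seq N - / INR (N + 1)) (gamma - 0))
      by exact (CV_minus _ _ _ _ Hgamma (inv_INR_cv0 1)).
    rewrite Rminus_0_r in H.
    exact (Un_cv_ext _ _ (fun N => eq_sym (gprim_nat N)) _ H).
Qed.
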